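(* Let $q$ be a prime power and $f:\mathbb{F}_q\to\mathbb{F}_q$ be differentially $d$-uniform. Then \[\sum_{r=1}^{d} r(d+1-r)M_r(f)\geq d \qquad (1)\] and \[\sum_{r=1}^{d+1} r(d+2-r)M_r(f)\geq q+d. \qquad (2)\] Equality holds in (1) if and only if $N(f)=(d+1)q-d$ and $M_r(f)=0$ for all $r\geq d+2$. Equality holds in (2) if and only if $N(f)=(d+1)q-d$ and $M_r(f)=0$ for all $r>d+2$; in that case \[\sum_{r=1}^{d} r(d+1-r)M_r(f)=(d+2)M_{d+2}(f)+d.\]
   Context: A map $f:\mathbb{F}_q\to\mathbb{F}_q$ is called differentially $d$-uniform ($d$-uniform) if $d=\max_{a\neq 0,\,b\in\mathbb{F}_q}|\{x\in\mathbb{F}_q: f(x+a)-f(x)=b\}|$. For $r\geq 1$, $M_r(f)$ denotes the number of $y\in\mathbb{F}_q$ with exactly $r$ preimages under $f$. $N(f)$ denotes the number of pairs $(x,y)\in\mathbb{F}_q^2$ with $f(x)=f(y)$. *)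

From HB Require Import structures.
From mathcomp Require Import all_boot all_order all_algebra.
Set Implicit Arguments. Unset Strict Implicit. Unset Printing Implicit Defensive.
Import GRing.Theory.
Local Open Scope ring_scope.

Definition diff_unif (F : finFieldType) (f : F -> F) : nat :=
  \max_(a : F | a != 0%R) \max_(b : F) #|[set x : F | (f (x + a) - f x)%R == b]|.

Definition Mr (F : finFieldType) (f : F -> F) (r : nat) : nat :=
  #|[set y : F | #|[set x : F | f x == y]| == r]|.

Definition Nf (F : finFieldType) (f : F -> F) : nat :=
  #|[set p : F * F | f p.1 == f p.2]|.

From mathcomp Require Import all_boot all_order all_algebra.
From mathcomp Require Import zify.
Set Implicit Arguments. Unset Strict Implicit. Unset Printing Implicit Defensive.

(* Write n_y = #f^-1(y) for the fibre sizes of f, so that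
   sum_y n_y = q and sum_y n_y^2 = N(f), and both weighted sums of the
   theorem read S_m = sum_y n_y (m - n_y) (truncated subtraction) for
   m = d+1, d+2.
   - Counting pairs (x, x + a) gives N(f) = sum_a #{x | f(x+a) = f(x)}; the
     term a = 0 is q and every other term is at most d, so N(f) + d <= (d+1)q.
   - Pointwise, n m <= n (m - n) + n^2 with equality iff n <= m; summing,
     m q <= S_m + N(f), with equality iff every fibre has size <= m, i.e.
     iff M_r(f) = 0 for all r > m.
   Combining the two inequalities gives (1), (2) and their equality cases by
   linear arithmetic.  When all fibres have size <= d+2, the pointwise
   identity n(d+1-n) + n^2 = (d+1)n + [n = d+2](d+2) yields the final formula. *)

Section Fibres.

Variables (T : finType) (rT : finType) (f : T -> rT).

Definition fibre (y : rT) : nat := #|[set x | f x == y]|.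

Lemma card_set_sum (U : finType) (P : pred U) :
  #|[set x | P x]| = \sum_x (P x : nat).
Proof. by rewrite -sum1dep_card big_mkcond /=; apply: eq_bigr => x _; case: (P x). Qed.

Lemma sum_over_fibres (g : rT -> nat) :
  \sum_x g (f x) = \sum_y fibre y * g y.
Proof.
under [RHS]eq_bigr => y _ do rewrite /fibre card_set_sum big_distrl /=.
rewrite exchange_big /=; apply: eq_bigr => x _.
rewrite (bigD1 (f x)) //= eqxx mul1n big1 ?addn0 // => y ne.
by rewrite eq_sym (negbTE ne).
Qed.

Lemma sum_fibres : \sum_y fibre y = #|T|.
Proof.
rewrite -sum1_card; have := sum_over_fibres (fun _ => 1).
by under [RHS]eq_bigr => y _ do rewrite muln1.
Qed.

Lemma collisions_fibres :
  #|[set p : T * T | f p.1 == f p.2]| = \sum_y fibre y * fibre y.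
Proof.
rewrite card_set_sum -(pair_big predT predT (fun x x' => (f x == f x' : nat))) /=.
rewrite -(sum_over_fibres fibre); apply: eq_bigr => x _.
by rewrite /fibre card_set_sum; apply: eq_bigr => x' _; rewrite eq_sym.
Qed.

End Fibres.

Section FibreCounts.

Variables (F : finFieldType) (f : F -> F).

Lemma Mr_count (r : nat) : Mr f r = \sum_y (fibre f y == r : nat).
Proof. by rewrite /Mr card_set_sum. Qed.

Lemma Mr_vanish_above (m : nat) :
  (forall r, m < r -> Mr f r = 0) <-> [forall y, fibre f y <= m].
Proof.
split=> [Hvan | /forallP Hle r lt_mr].
- apply/forallP => y; rewrite leqNgt; apply/negP => lt_m.
  have /eqP := Hvan _ lt_m; rewrite cards_eq0 => /eqP/setP/(_ y).
  by rewrite !inE eqxx.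
- rewrite Mr_count big1 // => y _.
  by rewrite ltn_eqF // (leq_ltn_trans (Hle y) lt_mr).
Qed.

Definition weighted_count (m : nat) : nat :=
  \sum_(1 <= r < m) r * (m - r) * Mr f r.

Lemma weighted_count_fibres (m : nat) :
  weighted_count m = \sum_y fibre f y * (m - fibre f y).
Proof.
rewrite /weighted_count.
have -> : \sum_(1 <= r < m) r * (m - r) * Mr f r
          = \sum_(0 <= r < m) r * (m - r) * Mr f r.
  case: m => [|m]; first by rewrite !big_geq.
  by rewrite [in RHS](big_ltn (ltn0Sn m)).
rewrite big_mkord.
under [LHS]eq_bigr => r _ do rewrite Mr_count big_distrr /=.
rewrite exchange_big /=; apply: eq_bigr => y _.
case: (ltnP (fibre f y) m) => [lt_m | ge_m].
- rewrite (bigD1 (Ordinal lt_m)) //= eqxx muln1 big1 ?addn0 // => i ne.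
  suff /negbTE -> : fibre f y != i by rewrite muln0.
  by apply: contra ne => /eqP e; apply/eqP/val_inj.
- rewrite (eqnP ge_m) muln0 big1 // => i _.
  by rewrite gtn_eqF ?muln0 // (leq_trans (ltn_ord i) ge_m).
Qed.

Lemma fibre_weight_leqif (n m : nat) : n * m <= n * (m - n) + n * n ?= iff (n <= m).
Proof.
split; first by case: (leqP n m) => h; nia.
by case: (leqP n m) => h; apply/eqP; [nia | move=> E; nia].
Qed.

Lemma weighted_count_leqif (m : nat) :
  m * #|F| <= weighted_count m + Nf f ?= iff [forall y, fibre f y <= m].
Proof.
have := leqif_sum (fun y (_ : true) => fibre_weight_leqif (fibre f y) m).
rewrite -big_distrl /= sum_fibres big_split /= -collisions_fibres mulnC.
rewrite -weighted_count_fibres => H.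
by rewrite (_ : [forall y, _] = [forall (y | true), fibre f y <= m]).
Qed.

Lemma weighted_count_extremal (m : nat) : [forall y, fibre f y <= m.+1] ->
  weighted_count m + Nf f = m * #|F| + m.+1 * Mr f m.+1.
Proof.
move=> /forallP Hle.
have Hpt y : fibre f y * (m - fibre f y) + fibre f y * fibre f y
             = fibre f y * m + (fibre f y == m.+1) * m.+1.
  have := Hle y; rewrite leq_eqVlt => /orP [/eqP -> | lt_m].
    by rewrite eqxx; nia.
  by rewrite (ltn_eqF lt_m) mul0n addn0; nia.
rewrite weighted_count_fibres /Nf collisions_fibres -big_split /=.
rewrite (eq_bigr _ (fun y _ => Hpt y)) big_split /= -!big_distrl /=.
by rewrite sum_fibres Mr_count mulnC [_ * m.+1]mulnC.
Qed.

End FibreCounts.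

Lemma Nf_shifts (F : finFieldType) (f : F -> F) :
  Nf f = \sum_a #|[set x | (f (x + a) - f x == 0)%R]|.
Proof.
rewrite /Nf card_set_sum -(pair_big predT predT (fun x x' => (f x == f x' : nat))) /=.
rewrite (eq_bigr (fun x => \sum_a (f x == f (x + a)%R : nat))); last first.
  by move=> x _; rewrite (reindex_inj (@GRing.addrI _ x)).
rewrite exchange_big /=; apply: eq_bigr => a _; rewrite card_set_sum.
by apply: eq_bigr => x _; rewrite GRing.subr_eq0 eq_sym.
Qed.

Lemma diff_count_le (F : finFieldType) (f : F -> F) (a b : F) : a != 0%R ->
  #|[set x | (f (x + a) - f x == b)%R]| <= diff_unif f.
Proof.
move=> nz_a; pose count a b := #|[set x | (f (x + a) - f x == b)%R]|.
apply: leq_trans (@leq_bigmax _ (count a) b) _.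
exact: (@leq_bigmax_cond _ (fun a => a != 0%R) (fun a => \max_b count a b) a nz_a).
Qed.

Lemma Nf_bound (F : finFieldType) (f : F -> F) :
  Nf f + diff_unif f <= (diff_unif f).+1 * #|F|.
Proof.
set d := diff_unif f.
have Hle : Nf f <= \sum_(a : F) (if a == 0%R then #|F| else d).
  rewrite Nf_shifts; apply: leq_sum => a _.
  by case: eqP => [_ | /eqP nz_a]; [exact: max_card | exact: diff_count_le].
have Hsum : \sum_(a : F) (if a == 0%R then #|F| else d) + d = d.+1 * #|F|.
  have Hconst : \sum_(a : F) d = #|F| * d by rewrite sum_nat_const.
  rewrite (bigD1 0%R) //= eqxx (eq_bigr (fun _ => d)); last by move=> a /negbTE ->.
  by move: Hconst; rewrite (bigD1 0%R) //=; lia.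
by rewrite -Hsum leq_add2r.
Qed.

Lemma bound_and_equality (q d k S N : nat) (C : bool) :
  N + d <= d.+1 * q -> (k + d.+1) * q <= S + N ?= iff C ->
  k * q + d <= S /\ (S = k * q + d <-> N = d.+1 * q - d /\ C).
Proof.
move=> HN [HS HC]; split; first nia.
split=> [E | [EN HCt]].
- have Heq : (k + d.+1) * q == S + N by apply/eqP; nia.
  by rewrite HC in Heq; split=> //; nia.
- by move: HCt; rewrite -HC => /eqP; nia.
Qed.

Theorem theorem2p7 (F : finFieldType) (f : F -> F) (d : nat) :
  d = diff_unif f ->
  let q := #|F| in
  [/\ (d <= \sum_(1 <= r < d.+1) r * (d.+1 - r) * Mr f r)%N,
      (q + d <= \sum_(1 <= r < d.+2) r * (d.+2 - r) * Mr f r)%N,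
      ((\sum_(1 <= r < d.+1) r * (d.+1 - r) * Mr f r = d)%N <->
         (Nf f = d.+1 * q - d)%N /\ (forall r : nat, (d.+2 <= r)%N -> Mr f r = 0%N)) &
      ((\sum_(1 <= r < d.+2) r * (d.+2 - r) * Mr f r = q + d)%N <->
         (Nf f = d.+1 * q - d)%N /\ (forall r : nat, (d.+2 < r)%N -> Mr f r = 0%N)) /\
      ((\sum_(1 <= r < d.+2) r * (d.+2 - r) * Mr f r = q + d)%N ->
         (\sum_(1 <= r < d.+1) r * (d.+1 - r) * Mr f r = d.+2 * Mr f d.+2 + d)%N)].
Proof.
move=> Hd q; rewrite -!/(weighted_count f _).
have HN : Nf f + d <= d.+1 * q by rewrite Hd; exact: Nf_bound.
have [ge1 eq1] := bound_and_equality (k := 0) HN (weighted_count_leqif f d.+1).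
have [ge2 eq2] := bound_and_equality (k := 1) HN (weighted_count_leqif f d.+2).
rewrite mul0n add0n in ge1 eq1; rewrite mul1n in ge2 eq2.
rewrite -!Mr_vanish_above in eq1 eq2.
split=> //; split=> // /eq2 [EN /Mr_vanish_above Hfib].
have := weighted_count_extremal Hfib; lia.
Qed.
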